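(* Consider the frameless ALOHA model with $n$ users and $m$ slots and its iterative (peeling) successive interference cancellation decoder, with state $S_u=(\mathtt{C}_u,\mathtt{R}_u)$ when $u$ users are unresolved, as described in the context. Let $1\le u\le n$ and suppose the decoder is in state $S_u=(c_u,r_u)$ with $r_u>0$. Then for integers $a_u,b_u$ with $0\le b_u\le c_u$, $a_u\ge 1$ and $a_u-b_u\le r_u$, $$\Pr\{S_{u-1}=(c_u-b_u,\; r_u-a_u+b_u)\mid S_u=(c_u,r_u)\} = \binom{c_u}{b_u} q_u^{\,b_u}(1-q_u)^{c_u-b_u}\binom{r_u-1}{a_u-1}\left(\frac1u\right)^{a_u-1}\left(1-\frac1u\right)^{r_u-a_u},$$ where $$q_u=\frac{\displaystyle\sum_{d=2}^{n-u+2}\Omega_d\, d(d-1)\,\frac1n\,\frac{u-1}{n-1}\,\frac{\binom{n-u}{d-2}}{\binom{n-2}{d-2}}}{\displaystyle 1-\sum_{d=1}^{n-u+1}\Omega_d\, u\,\frac{\binom{n-u}{d-1}}{\binom{n}{d}}-\sum_{d=0}^{n-u}\Omega_d\,\frac{\binom{n-u}{d}}{\binom{n}{d}}}.$$ Here $b_u$ is the number of slots that leave the cloud and enter the ripple in the transition from $u$ to $u-1$ unresolved users, and $a_u$ is the number of slots that leave the ripple in that transition; $q_u$ is the probability that a slot in the cloud when $u$ users are unresolved is in the ripple when $u-1$ users are unresolved.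
   Context: Frameless ALOHA model: there are $n$ users and $m$ slots. Each slot independently has a (original) degree $d\in\{0,1,\dots,n\}$ with probability $\Omega_d$ (the slot degree distribution; in the basic model each user transmits in each slot independently with probability $p=\beta/n$, so $\Omega_d=\binom{n}{d}p^d(1-p)^{n-d}$), and, given its degree $d$, the set of users transmitting in the slot (its neighbours) is a uniformly random $d$-subset of the $n$ users, chosen without replacement. This defines a bipartite graph between users and slots. Collision channel: a slot with exactly one (uncancelled) transmission is decodable, slots with two or more are not. Decoding (peeling / successive interference cancellation): initially all $n$ users are unresolved ($u=n$). The reduced degree of a slot is the number of its neighbours that are still unresolved. The ripple is the set of slots of reduced degree $1$, with cardinality $\mathtt{R}_u$ (value $r_u$) when $u$ users are unresolved; the cloud is the set of slots of reduced degree at least $2$, with cardinality $\mathtt{C}_u$ (value $c_u$). The decoder state is $S_u=(\mathtt{C}_u,\mathtt{R}_u)$. At each step, if the ripple is nonempty, the decoder picks a slot from the ripple uniformly at random, resolves its unique unresolved neighbour user, and removes all edges of that user from the graph (so $u$ decreases by $1$); if the ripple is empty, decoding stops (fails). Thus $c_{u-1}=c_u-b_u$ and $r_{u-1}=r_u-a_u+b_u$. *)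

From HB Require Import structures.
From mathcomp Require Import all_boot all_order all_algebra.
Set Implicit Arguments.
Unset Strict Implicit.
Unset Printing Implicit Defensive.
Import Order.TTheory GRing.Theory Num.Theory.
Local Open Scope ring_scope.

(* Bipartite graph: slot j ('I_m) -> its set of neighbour users ('I_n). *)
Definition graph (n m : nat) := {ffun 'I_m -> {set 'I_n}}.

(* Probability of a graph: slots independent; slot j has degree d with prob
   Omega d, and its neighbourhood is a uniform d-subset of the n users. *)
Definition graph_weight (R : fieldType) (n m : nat) (Omega : nat -> R)
  (G : graph n m) : R :=
  \prod_(j < m) (Omega #|G j| / ('C(n, #|G j|))%:R).

(* U = set of unresolved users.  Reduced degree of slot j = #|G j :&: U|. *)
Definition ripple (n m : nat) (G : graph n m) (U : {set 'I_n}) : {set 'I_m} :=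
  [set j | #|G j :&: U| == 1%N].
Definition cloud (n m : nat) (G : graph n m) (U : {set 'I_n}) : {set 'I_m} :=
  [set j | (1 < #|G j :&: U|)%N].

Definition resolve (n m : nat) (G : graph n m) (U : {set 'I_n}) (j : 'I_m)
  : {set 'I_n} := U :\: (G j :&: U).

(* One decoder step on a (sub)distribution over unresolved sets: a ripple slot
   is chosen uniformly at random; if the ripple is empty decoding stops
   (no mass is propagated). *)
Definition dec_step (R : fieldType) (n m : nat) (G : graph n m)
  (mu : {set 'I_n} -> R) : {set 'I_n} -> R :=
  fun U' => \sum_(U : {set 'I_n})
     mu U * ((\sum_(j in ripple G U) ((U' == resolve G U j)%:R)) / (#|ripple G U|)%:R).

(* reach G k U = probability (over decoder choices, given graph G) that the
   decoder performs k steps and the set of unresolved users is then U. *)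
Fixpoint reach (R : fieldType) (n m : nat) (G : graph n m) (k : nat)
  : {set 'I_n} -> R :=
  match k with
  | 0 => fun U => ((U == setT) : nat)%:R
  | k'.+1 => dec_step G (reach R G k')
  end.

Definition state_is (n m : nat) (G : graph n m) (U : {set 'I_n}) (c r : nat)
  : bool := (#|cloud G U| == c) && (#|ripple G U| == r).

Definition prob_state (R : fieldType) (n m : nat) (Omega : nat -> R)
  (u c r : nat) : R :=
  \sum_(G : graph n m) graph_weight Omega G *
    \sum_(U : {set 'I_n} | #|U| == u)
       reach R G (n - u) U * ((state_is G U c r) : nat)%:R.

Definition prob_trans (R : fieldType) (n m : nat) (Omega : nat -> R)
  (u c r c' r' : nat) : R :=
  \sum_(G : graph n m) graph_weight Omega G *
    \sum_(U : {set 'I_n} | #|U| == u)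
       (reach R G (n - u) U * ((state_is G U c r) : nat)%:R *
        ((\sum_(j in ripple G U) ((state_is G (resolve G U j) c' r') : nat)%:R)
          / (#|ripple G U|)%:R)).

Definition cond_trans (R : fieldType) (n m : nat) (Omega : nat -> R)
  (u c r c' r' : nat) : R :=
  prob_trans n m Omega u c r c' r' / prob_state n m Omega u c r.

Definition q_u (R : fieldType) (n : nat) (Omega : nat -> R) (u : nat) : R :=
  (\sum_(2 <= d < (n - u + 2).+1)
      Omega d * (d%:R * (d%:R - 1)) * (1 / n%:R) * ((u%:R - 1) / (n%:R - 1))
      * (('C(n - u, d - 2))%:R / ('C(n - 2, d - 2))%:R))
  / (1 - \sum_(1 <= d < (n - u + 1).+1)
            Omega d * u%:R * (('C(n - u, d - 1))%:R / ('C(n, d))%:R)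
       - \sum_(0 <= d < (n - u).+1)
            Omega d * (('C(n - u, d))%:R / ('C(n, d))%:R)).

(* Fix the set [U] of unresolved users.  The decoder's run up to [U], hence the
   event S_u = (c, r), only depends on the [slot_pattern] of every slot: its
   neighbours outside [U] and whether it has 0, 1 or at least 2 neighbours in
   [U].  Given these patterns the slots remain independent; the unresolved
   neighbour of a ripple slot is uniform on [U], and a cloud slot contains a
   given user [x] and exactly one other unresolved user with probability q_u.
   When [x] is resolved, a_u counts the ripple slots containing [x] and b_u the
   cloud slots of reduced degree 2 containing [x], so they are independent
   binomials with parameters (r, 1/u) and (c, q_u).  The decoder resolves [x]
   with probability a_u / r; summing over the u users turns
   (a u / r) Bin(r, 1/u)(a) into Bin(r - 1, 1/u)(a - 1). *)

From HB Require Import structures.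
From mathcomp Require Import all_boot all_order all_algebra zify ring lra.
Set Implicit Arguments.
Unset Strict Implicit.
Unset Printing Implicit Defensive.
Import Order.TTheory GRing.Theory Num.Theory.
Local Open Scope ring_scope.

(** * Binomial laws under product weights *)

Section Indicators.
Variable R : fieldType.

Lemma prodr_nat_forall (I : finType) (P : pred I) :
  \prod_i ((P i)%:R : R) = [forall i, P i]%:R.
Proof.
case: forallP => [allP | notallP]; first by rewrite big1 // => i _; rewrite allP.
have /existsP [i /negbTE Pi] : [exists i, ~~ P i].
  by rewrite -negb_forall; apply/forallP.
by rewrite (bigD1 i) //= Pi mul0r.
Qed.

Lemma eq_set_indicE (I : finType) (A B : {set I}) :
  ((A == B)%:R : R) = \prod_i (((i \in A) == (i \in B))%:R).
Proof.
rewrite prodr_nat_forall; suff -> : (A == B) = [forall i, (i \in A) == (i \in B)] by [].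
by apply/eqP/forallP => [-> // | eqAB]; apply/setP => i; apply/eqP.
Qed.

Lemma eq_ffun_indicE (I T : finType) (f g : {ffun I -> T}) :
  ((f == g)%:R : R) = \prod_i ((f i == g i)%:R).
Proof.
rewrite prodr_nat_forall; suff -> : (f == g) = [forall i, f i == g i] by [].
by apply/eqP/forallP => [-> // | eqfg]; apply/ffunP => i; apply/eqP.
Qed.

Lemma sum_nat_indicE (I : finType) (P : pred I) :
  \sum_i ((P i)%:R : R) = #|[set i | P i]|%:R.
Proof.
rewrite -sum1dep_card natr_sum [RHS]big_mkcond /=.
by apply: eq_bigr => i _; case: (P i).
Qed.

Lemma sum_nat_indic_setE (I : finType) (A : {set I}) (P : pred I) :
  \sum_(i in A) ((P i)%:R : R) = #|[set i in A | P i]|%:R.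
Proof.
rewrite big_mkcond -sum_nat_indicE /=.
by apply: eq_bigr => i _; case: (i \in A).
Qed.

Lemma sum_card_indicE (I : finType) (X : {set I}) (k : nat) :
  ((#|X| == k)%:R : R) = \sum_(A : {set I}) (#|A| == k)%:R * (A == X)%:R.
Proof.
rewrite (bigD1 X) //= eqxx mulr1 big1 ?addr0 // => A /negbTE ->.
by rewrite mulr0.
Qed.

End Indicators.

Definition binomial_pmf (R : pzRingType) (N k : nat) (p : R) : R :=
  'C(N, k)%:R * p ^+ k * (1 - p) ^+ (N - k).

Lemma binomial_pmf_pred (R : numFieldType) (N k : nat) (p : R) :
  p != 0 -> (0 < N)%N -> (0 < k)%N ->
  k%:R / N%:R / p * binomial_pmf N k p = binomial_pmf (N - 1) (k - 1) p.
Proof.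
move=> p_neq0; case: N => [|N] // _; case: k => [|k] // _.
rewrite /binomial_pmf !subn1 /= subSS.
have [lt_Nk | le_kN] := ltnP N k; first by rewrite !bin_small ?mul0r ?mulr0.
have binE : 'C(N.+1, k.+1)%:R = N.+1%:R * 'C(N, k)%:R / k.+1%:R :> R.
  by rewrite -natrM (mul_bin_diag N.+1 k) natrM mulrC mulKf // pnatr_eq0.
by rewrite binE exprS; field; rewrite p_neq0 ![1 + _]addrC !natr1 !pnatr_eq0.
Qed.

Section BinomialLaw.
Variables (R : fieldType) (I T : finType) (f : I -> T -> R).
Local Notation mass j := (\sum_S f j S).

Lemma prod_bernoulli (Rs A : {set I}) (th : R) :
  \prod_j (if j \in Rs then (if j \in A then th else 1 - th)
           else ((j \notin A)%:R : R)) =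
  (A \subset Rs)%:R * (th ^+ #|A| * (1 - th) ^+ (#|Rs| - #|A|)).
Proof.
have [sARs | /subsetPn [j jA /negbTE jRs]] := boolP (A \subset Rs); last first.
  by rewrite (bigD1 j) //= jRs jA !mul0r.
rewrite mul1r (bigID (mem Rs)) /= [X in _ * X]big1 ?mulr1; last first.
  move=> j /negbTE jRs; rewrite jRs.
  by have /negbTE -> : j \notin A by apply/negP => /(subsetP sARs); rewrite jRs.
rewrite (bigID (mem A)) /= (eq_bigl (mem A)); last first.
  by move=> j /=; apply/andP/idP => [[] // | jA]; rewrite (subsetP sARs).
rewrite [X in _ * X](eq_bigl (mem (Rs :\: A))); last by move=> j /=; rewrite inE andbC.
rewrite (eq_bigr (fun _ => th)); last by move=> j jA; rewrite (subsetP sARs j jA) (jA : j \in A).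
rewrite [X in _ * X](eq_bigr (fun _ => 1 - th)); last first.
  by move=> j /setDP [-> /negbTE ->].
by rewrite !prodr_const cardsD (setIidPr sARs).
Qed.

Variables (Rs : {set I}) (E : T -> bool) (th : R).
Hypothesis mass_E : forall j, j \in Rs -> \sum_S f j S * (E S)%:R = th * mass j.

Lemma mass_indic_eq (A : {set I}) j :
  \sum_S f j S * (((j \in A) == (j \in Rs) && E S))%:R =
  mass j * (if j \in Rs then (if j \in A then th else 1 - th)
            else (j \notin A)%:R).
Proof.
have [jRs | _] /= := boolP (j \in Rs); last first.
  by rewrite mulr_suml; apply: eq_bigr => S _; case: (j \in A).
have [jA | _] /= := boolP (j \in A).
  by rewrite (eq_bigr (fun S => f j S * (E S)%:R)) ?mass_E ?[th * _]mulrC //;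
    move=> S _; case: (E S).
rewrite (eq_bigr (fun S => f j S - f j S * (E S)%:R)); last first.
  by move=> S _; case: (E S); rewrite /= ?mulr1 ?mulr0 ?subrr ?subr0.
by rewrite sumrB mass_E // mulrBr mulr1 mulrC.
Qed.

Lemma sum_sets_bernoulli (k : nat) :
  \sum_(A : {set I}) (#|A| == k)%:R *
     \prod_j (\sum_S f j S * (((j \in A) == (j \in Rs) && E S))%:R)
  = binomial_pmf #|Rs| k th * \prod_j mass j.
Proof.
rewrite (eq_bigr (fun A : {set I} => ((A \subset Rs) && (#|A| == k))%:R *
   (th ^+ k * (1 - th) ^+ (#|Rs| - k) * \prod_j mass j))); last first.
  move=> A _; rewrite (eq_bigr _ (fun j _ => mass_indic_eq A j)) big_split /=.
  rewrite prod_bernoulli; have [/eqP -> | _] := boolP (#|A| == k); last first.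
    by rewrite andbF !mul0r.
  by rewrite andbT /=; ring.
rewrite -mulr_suml sum_nat_indicE.
have -> : #|[set A : {set I} | (A \subset Rs) && (#|A| == k)]| = 'C(#|Rs|, k).
  exact: cards_draws.
by rewrite !mulrA.
Qed.

Lemma binomial_law (k : nat) :
  \sum_(G : {ffun I -> T}) (\prod_j f j (G j)) *
      (#|[set j in Rs | E (G j)]| == k)%:R
  = binomial_pmf #|Rs| k th * \prod_j mass j.
Proof.
rewrite -sum_sets_bernoulli.
under eq_bigr do rewrite sum_card_indicE mulr_sumr.
rewrite exchange_big /=; apply: eq_bigr => A _.
under eq_bigr do rewrite mulrCA.
rewrite -mulr_sumr bigA_distr_bigA /=; congr (_ * _); apply: eq_bigr => G _.
rewrite eq_set_indicE -big_split /=; apply: eq_bigr => j _.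
by rewrite inE.
Qed.

End BinomialLaw.

Lemma binomial_law2 (R : fieldType) (I T : finType) (f : I -> T -> R)
  (R1 R2 : {set I}) (E1 E2 : T -> bool) (th1 th2 : R) (a b : nat) :
  [disjoint R1 & R2] ->
  (forall j, j \in R1 -> \sum_S f j S * (E1 S)%:R = th1 * \sum_S f j S) ->
  (forall j, j \in R2 -> \sum_S f j S * (E2 S)%:R = th2 * \sum_S f j S) ->
  \sum_(G : {ffun I -> T}) (\prod_j f j (G j)) *
      (#|[set j in R1 | E1 (G j)]| == a)%:R *
      (#|[set j in R2 | E2 (G j)]| == b)%:R
  = binomial_pmf #|R1| a th1 * (binomial_pmf #|R2| b th2 * \prod_j \sum_S f j S).
Proof.
move=> disR mass1 mass2; rewrite -(sum_sets_bernoulli mass2).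
under eq_bigr do rewrite [X in _ * X]sum_card_indicE mulr_sumr.
rewrite exchange_big /= mulr_sumr; apply: eq_bigr => A _.
under eq_bigr do rewrite mulrCA.
rewrite -mulr_sumr [RHS]mulrCA; congr (_ * _).
(* The event defining the second count is absorbed into the weights. *)
pose fA j S := f j S * (((j \in A) == (j \in R2) && E2 S))%:R.
have massA1 j : j \in R1 -> \sum_S fA j S * (E1 S)%:R = th1 * \sum_S fA j S.
  move=> jR1; rewrite /fA (disjointFr disR jR1) /=.
  under eq_bigr do rewrite mulrAC.
  by rewrite -mulr_suml mass1 // -mulr_suml mulrA.
rewrite -(binomial_law massA1); apply: eq_bigr => G _.
rewrite eq_set_indicE mulrAC -big_split /=; congr (_ * _).
by apply: eq_bigr => j _; rewrite /fA inE.
Qed.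

(** * Counting subsets *)

Section SubsetCounting.
Variable T : finType.
Implicit Types A B U S : {set T}.

Lemma setUI_trace A B U : A \subset U -> B \subset ~: U -> (A :|: B) :&: U = A.
Proof.
move=> sAU sBU; apply/setP => x; rewrite !inE.
have [xA | _] /= := boolP (x \in A); first by rewrite (subsetP sAU).
by apply/andP => -[/(subsetP sBU)]; rewrite inE => /negbTE ->.
Qed.

Lemma setUD_trace A B U : A \subset U -> B \subset ~: U -> (A :|: B) :\: U = B.
Proof.
move=> sAU sBU; rewrite setDUl; have /eqP -> : A :\: U == set0 by rewrite setD_eq0.
by rewrite set0U; apply/setDidPl; rewrite -[U]setCK -subsets_disjoint.
Qed.

Lemma card_setC U : #|~: U| = (#|T| - #|U|)%N.
Proof. by rewrite [LHS]cardsCs setCK. Qed.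

Lemma card_draws_trace U (P : pred {set T}) (k d : nat) :
  (k <= d)%N -> (forall A, P A -> #|A| = k) ->
  #|[set S : {set T} | (#|S| == d) && P (S :&: U)]| =
  (#|[set A : {set T} | (A \subset U) && P A]| * 'C(#|~: U|, d - k))%N.
Proof.
move=> kd cardP; rewrite -cards_draws -cardsX.
rewrite -(@card_in_imset _ _ (fun S => (S :&: U, S :\: U))); last first.
  by move=> S1 S2 _ _ [] E1 E2; rewrite -(setID S1 U) -(setID S2 U) E1 E2.
congr #|pred_of_set _|; apply/setP => [[A B]]; rewrite !inE /=.
apply/imsetP/andP => [[S] | [/andP [sAU PA] /andP [sBU /eqP cardB]]].
  rewrite inE => /andP [/eqP cardS PS] [-> ->].
  rewrite subsetIr PS; split=> //; apply/andP; split.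
    by apply/subsetP => x; rewrite !inE => /andP [].
  by rewrite -cardS -(cardsID U S) (cardP _ PS) addKn.
exists (A :|: B); last by rewrite setUI_trace // setUD_trace.
rewrite inE setUI_trace // PA andbT.
by rewrite -(cardsID U) setUI_trace // setUD_trace // cardB (cardP _ PA) subnKC.
Qed.

Lemma card_draws_traceE U (k d : nat) :
  #|[set S : {set T} | (#|S| == d) && (#|S :&: U| == k)]| =
  if (k <= d)%N then ('C(#|U|, k) * 'C(#|T| - #|U|, d - k))%N else 0%N.
Proof.
case: leqP => kd.
  rewrite (@card_draws_trace U (fun A => #|A| == k) k d kd); last by move=> A /eqP.
  by rewrite cards_draws card_setC.
apply: eq_card0 => S; rewrite inE; apply/negP => /andP [/eqP cardS /eqP cardSU].
by move: (subset_leq_card (subsetIl S U)); rewrite cardS cardSU leqNgt kd.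
Qed.

Lemma card_pairs_through U x : x \in U ->
  #|[set A : {set T} | (A \subset U) && ((#|A| == 2) && (x \in A))]| = (#|U| - 1)%N.
Proof.
move=> xU; have notin_U1 B : B \subset U :\ x -> x \notin B.
  by move=> sB; apply/negP => /(subsetP sB); rewrite !inE eqxx.
have -> : (#|U| - 1 = 'C(#|U :\ x|, 1))%N by rewrite bin1 (cardsD1 x U) xU add1n subn1.
rewrite -cards_draws -[RHS](@card_in_imset _ _ (fun B => x |: B)); last first.
  move=> B1 B2; rewrite !inE => /andP [/notin_U1 n1 _] /andP [/notin_U1 n2 _] E.
  by rewrite -(setU1K n1) -(setU1K n2) E.
congr #|pred_of_set _|; apply/setP => A; rewrite inE; apply/idP/imsetP.
  move=> /andP [sAU /andP [/eqP cardA xA]]; exists (A :\ x); last by rewrite setD1K.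
  rewrite inE setSD //=.
  by move: cardA; rewrite (cardsD1 x A) xA add1n => -[->].
move=> [B]; rewrite inE => /andP [sB /eqP cardB] ->.
rewrite cardsU1 (notin_U1 _ sB) cardB setU11 !andbT.
by rewrite subUset sub1set xU (subset_trans sB) ?subD1set.
Qed.

Lemma card_draws_pair_trace U x (d : nat) : x \in U ->
  #|[set S : {set T} | (#|S| == d) && ((x \in S) && (#|S :&: U| == 2))]| =
  if (2 <= d)%N then ((#|U| - 1) * 'C(#|T| - #|U|, d - 2))%N else 0%N.
Proof.
move=> xU; case: (leqP 2 d) => twod.
  rewrite -(card_pairs_through xU) -card_setC.
  rewrite -(@card_draws_trace U (fun A => (#|A| == 2) && (x \in A)) 2 d twod);
    last by move=> A /andP [/eqP].
  apply: eq_card => S; rewrite !inE xU andbT.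
  by case: (x \in S); case: (#|S :&: U| == 2)%N; rewrite ?andbF ?andbT.
apply: eq_card0 => S; rewrite inE; apply/negP => /andP [/eqP cardS /andP [_ /eqP cardSU]].
by move: (subset_leq_card (subsetIl S U)); rewrite cardS cardSU leqNgt twod.
Qed.

Lemma sum_sets_by_card (R : fieldType) (N : nat) (Q : pred {set T}) (g : nat -> R) :
  (#|T| <= N)%N ->
  \sum_(S : {set T}) g #|S| * (Q S)%:R =
  \sum_(d < N.+1) g d * #|[set S : {set T} | (#|S| == d) && Q S]|%:R.
Proof.
move=> cardT; under [RHS]eq_bigr => d _.
  rewrite -sum_nat_indicE mulr_sumr.
  over.
rewrite exchange_big /=; apply: eq_bigr => S _.
have cardS : (#|S| < N.+1)%N by rewrite ltnS (leq_trans (max_card _) cardT).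
rewrite (bigD1 (Ordinal cardS)) //= eqxx /= big1 ?addr0 // => d neq_dS.
have /negbTE -> : #|S| != d by apply: contra neq_dS => /eqP cardSd; rewrite -val_eqE /= cardSd.
by rewrite /= mulr0.
Qed.

End SubsetCounting.

(** * Slot patterns *)

Definition slot_pattern (T : finType) (U S : {set T}) : option ({set T} * bool) :=
  if (1 < #|S :&: U|)%N then None else Some (S :\: U, #|S :&: U| == 1%N).

Section SlotPattern.
Variable T : finType.
Implicit Types S U V W X O : {set T}.

Lemma eq_pattern_cloud S S' U : slot_pattern U S = slot_pattern U S' ->
  (1 < #|S :&: U|)%N = (1 < #|S' :&: U|)%N.
Proof. by rewrite /slot_pattern; do 2!case: ifP. Qed.

Lemma eq_pattern_small S S' U : slot_pattern U S = slot_pattern U S' ->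
  (#|S :&: U| <= 1)%N -> #|S :&: U| = #|S' :&: U| /\ S :\: U = S' :\: U.
Proof.
rewrite /slot_pattern => + small; rewrite ltnNge small /=.
case: ifP => // small' [eqD eq1]; split=> //.
move: small small' eq1; move: #|S :&: U| #|S' :&: U| => k k'.
by case: k => [|[|k]]; case: k' => [|[|k']].
Qed.

Lemma cardsI_split S U W : U \subset W ->
  #|S :&: W| = (#|S :&: U| + #|(S :\: U) :&: W|)%N.
Proof.
move=> sUW; rewrite -(cardsID U (S :&: W)) -setIA (setIidPr sUW).
by rewrite setDE setIAC -setDE.
Qed.

Lemma eq_pattern_ripple S S' U W : U \subset W ->
  slot_pattern U S = slot_pattern U S' ->
  (#|S :&: W| == 1%N) = (#|S' :&: W| == 1%N).
Proof.
move=> sUW eqSS'; rewrite (cardsI_split S sUW) (cardsI_split S' sUW).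
have [small | big] := leqP #|S :&: U| 1.
  by have [-> ->] := eq_pattern_small eqSS' small.
have big' : (1 < #|S' :&: U|)%N by rewrite -(eq_pattern_cloud eqSS').
move: big big'; move: #|S :&: U| #|S' :&: U| => k k'.
by case: k => [|[|k]]; case: k' => [|[|k']].
Qed.

Lemma setD_meet_neq V W X U : U \subset V -> (exists2 y, y \in X & y \in U) ->
  (V == W :\: X) = false.
Proof.
move=> sUV [y yX yU]; apply/negbTE/negP => /eqP eqV.
by move: (subsetP sUV y yU); rewrite eqV !inE yX.
Qed.

Lemma eq_pattern_resolve S S' U V W : U \subset V -> U \subset W ->
  slot_pattern U S = slot_pattern U S' -> (#|S :&: W| == 1%N) ->
  (V == W :\: (S :&: W)) = (V == W :\: (S' :&: W)).
Proof.
move=> sUV sUW eqSS'; rewrite (cardsI_split S sUW) => /eqP deg1.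
have [cardSU eqSU] := eq_pattern_small eqSS' (leq_trans (leq_addr _ _) (eq_leq deg1)).
have [noneU | someU] := posnP #|S :&: U|.
  have disjU X : #|X :&: U| = 0%N -> X :\: U = X.
    by move=> /eqP; rewrite cards_eq0 setI_eq0 => /setDidPl.
  by rewrite -(disjU S) // -(disjU S') -?cardSU // eqSU.
have meetW X : (0 < #|X :&: U|)%N -> exists2 y, y \in X :&: W & y \in U.
  move=> /card_gt0P [y]; rewrite inE => /andP [yX yU].
  by exists y; rewrite // inE yX (subsetP sUW).
by rewrite !(setD_meet_neq W sUV (meetW _ _)) // -cardSU.
Qed.

Lemma slot_pattern_rippleE S U O :
  (slot_pattern U S == Some (O, true)) = (#|S :&: U| == 1%N) && (S :\: U == O).
Proof.
rewrite /slot_pattern; case: ifP => [big | _]; first by case: #|S :&: U| big => [|[|]].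
by apply/eqP/andP => [[-> ->] | [/eqP -> /eqP ->]].
Qed.

Lemma slot_pattern_ripple_imset U O : O \subset ~: U ->
  [set S | slot_pattern U S == Some (O, true)] = [set y |: O | y in U].
Proof.
move=> sOU; apply/setP => S; rewrite inE slot_pattern_rippleE; apply/andP/imsetP.
  move=> [/cards1P [y eqSU] /eqP eqSO]; have /setIP [_ yU] : y \in S :&: U.
    by rewrite eqSU set11.
  by exists y; rewrite // -(setID S U) eqSU eqSO.
move=> [y yU ->]; have sUy : [set y] \subset U by rewrite sub1set.
by rewrite setUI_trace // setUD_trace // cards1 !eqxx.
Qed.

End SlotPattern.

Definition graph_pattern (n m : nat) (U : {set 'I_n}) (G : graph n m) :
  {ffun 'I_m -> option ({set 'I_n} * bool)} := [ffun j => slot_pattern U (G j)].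

Section PatternInvariance.
Variables (R : fieldType) (n m : nat).
Implicit Types (U V W : {set 'I_n}) (G : graph n m).

Lemma graph_patternP U G G' : graph_pattern U G = graph_pattern U G' ->
  forall j, slot_pattern U (G j) = slot_pattern U (G' j).
Proof.
by move=> eqGG' j; have := congr1 (fun f : {ffun _ -> _} => f j) eqGG'; rewrite !ffunE.
Qed.

Lemma eq_ripple_pattern U W G G' : U \subset W ->
  graph_pattern U G = graph_pattern U G' -> ripple G W = ripple G' W.
Proof.
move=> sUW /graph_patternP eqGG'; apply/setP => j.
by rewrite !inE (eq_pattern_ripple sUW (eqGG' j)).
Qed.

Lemma eq_cloud_pattern U G G' :
  graph_pattern U G = graph_pattern U G' -> cloud G U = cloud G' U.
Proof.
by move=> /graph_patternP eqGG'; apply/setP => j; rewrite !inE (eq_pattern_cloud (eqGG' j)).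
Qed.

Lemma eq_state_pattern U G G' c r :
  graph_pattern U G = graph_pattern U G' -> state_is G U c r = state_is G' U c r.
Proof.
by move=> eqGG'; rewrite /state_is (eq_cloud_pattern eqGG') (eq_ripple_pattern (subxx U) eqGG').
Qed.

Lemma eq_reach_pattern U G G' k V : U \subset V ->
  graph_pattern U G = graph_pattern U G' -> reach R G k V = reach R G' k V.
Proof.
move=> + eqGG'; elim: k V => [// | k IHk] V sUV /=.
rewrite /dec_step; apply: eq_bigr => W _.
have [sUW | nsUW] := boolP (U \subset W).
  rewrite IHk // -(eq_ripple_pattern sUW eqGG'); congr (_ * (_ / _)).
  apply: eq_bigr => j; rewrite inE => deg1.
  by rewrite /resolve (eq_pattern_resolve sUV sUW (graph_patternP eqGG' j) deg1).
suff no_step G0 : \sum_(j in ripple G0 W) ((V == resolve G0 W j)%:R : R) = 0.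
  by rewrite !no_step !mul0r !mulr0.
apply: big1 => j _; case: eqP => // eqV.
by move: nsUW; rewrite (subset_trans sUV) // eqV subsetDl.
Qed.

End PatternInvariance.

(** * One decoding step *)

(* Resolving the user [x] turns [U] into [U :\ x]; these are the slots counted
   by a_u and b_u in that transition. *)
Definition leaving_ripple (n m : nat) (G : graph n m) (U : {set 'I_n}) (x : 'I_n) :=
  [set j in ripple G U | x \in G j].
Definition entering_ripple (n m : nat) (G : graph n m) (U : {set 'I_n}) (x : 'I_n) :=
  [set j in cloud G U | (x \in G j) && (#|G j :&: U| == 2)].

Section Transition.
Variables (R : fieldType) (n m : nat) (G : graph n m).
Implicit Types (U S : {set 'I_n}).

Lemma cardsI_setD1 S U x : x \in U -> #|S :&: U| = ((x \in S) + #|S :&: (U :\ x)|)%N.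
Proof. by move=> xU; rewrite (cardsD1 x (S :&: U)) inE xU andbT setIDA. Qed.

Lemma cloud_setD1 U x : x \in U -> cloud G (U :\ x) = cloud G U :\: entering_ripple G U x.
Proof.
move=> xU; apply/setP => j; rewrite !inE (cardsI_setD1 (G j) xU).
by case: (x \in G j); case: #|G j :&: (U :\ x)| => [|[|[|k]]].
Qed.

Lemma ripple_setD1 U x : x \in U ->
  ripple G (U :\ x) = (ripple G U :\: leaving_ripple G U x) :|: entering_ripple G U x.
Proof.
move=> xU; apply/setP => j; rewrite !inE (cardsI_setD1 (G j) xU).
by case: (x \in G j); case: #|G j :&: (U :\ x)| => [|[|[|k]]].
Qed.

Lemma state_setD1 U x c r a b : x \in U ->
  #|cloud G U| = c -> #|ripple G U| = r -> (b <= c)%N -> (a <= r + b)%N ->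
  state_is G (U :\ x) (c - b) (r + b - a) =
  (#|entering_ripple G U x| == b) && (#|leaving_ripple G U x| == a).
Proof.
move=> xU cardC cardR le_bc le_arb.
have sub_cloud : entering_ripple G U x \subset cloud G U by apply/subsetP => j /setIdP [].
have sub_ripple : leaving_ripple G U x \subset ripple G U by apply/subsetP => j /setIdP [].
have disj : (ripple G U :\: leaving_ripple G U x) :&: entering_ripple G U x = set0.
  apply/setP => j; rewrite !inE.
  by case: (#|G j :&: U|) => [|[|k]]; rewrite ?andbF ?andbT //= !andbF.
rewrite /state_is cloud_setD1 // ripple_setD1 // cardsU disj cards0 subn0.
rewrite !cardsD (setIidPr sub_cloud) (setIidPr sub_ripple) cardC cardR.
have := subset_leq_card sub_cloud; have := subset_leq_card sub_ripple.
rewrite cardC cardR; move: #|entering_ripple G U x| #|leaving_ripple G U x| => B A.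
by move=> le_Ar le_Bc; apply/andP/andP => -[/eqP ? /eqP ?]; split; apply/eqP; lia.
Qed.

Lemma sum_ripple_resolve U (F : {set 'I_n} -> R) :
  \sum_(j in ripple G U) F (resolve G U j) =
  \sum_(x in U) #|leaving_ripple G U x|%:R * F (U :\ x).
Proof.
rewrite (eq_bigr (fun j => \sum_(x in U) (x \in G j)%:R * F (U :\ x))); last first.
  move=> j /[!inE] /cards1P [y eqGU].
  have /setIP [yG yU] : y \in G j :&: U by rewrite eqGU set11.
  rewrite /resolve eqGU (bigD1 y yU) /= yG mul1r big1 ?addr0 // => x /andP [xU neq_xy].
  have /negbTE -> : x \notin G j.
    by apply: contra neq_xy => xG; rewrite -in_set1 -eqGU inE xG.
  by rewrite mul0r.
rewrite exchange_big /=; apply: eq_bigr => x _.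
by rewrite -mulr_suml sum_nat_indic_setE.
Qed.

Lemma sum_ripple_state U c r a b :
  #|cloud G U| = c -> #|ripple G U| = r -> (b <= c)%N -> (a <= r + b)%N ->
  \sum_(j in ripple G U) ((state_is G (resolve G U j) (c - b) (r + b - a))%:R : R)
  = a%:R * \sum_(x in U)
      (#|leaving_ripple G U x| == a)%:R * (#|entering_ripple G U x| == b)%:R.
Proof.
move=> cardC cardR le_bc le_arb.
rewrite (sum_ripple_resolve U (fun V => (state_is G V (c - b) (r + b - a))%:R)).
rewrite mulr_sumr; apply: eq_bigr => x xU.
rewrite (state_setD1 xU cardC cardR le_bc le_arb).
have [/eqP -> | _] := boolP (#|leaving_ripple G U x| == a).
  by rewrite andbT mul1r.
by rewrite andbF mul0r !mulr0.
Qed.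

End Transition.

(** * Masses of slot events *)

Lemma mul_bin_diag2 k e : ('C(k.+2, e.+2) * (e.+2 * e.+1) = k.+2 * k.+1 * 'C(k, e))%N.
Proof.
rewrite mulnA [(_ * e.+2)%N]mulnC -(mul_bin_diag k.+2 e.+1) /=.
by rewrite -mulnA [(_ * e.+1)%N]mulnC -(mul_bin_diag k.+1 e) mulnA.
Qed.

Lemma sum_nat_to_ord (R : fieldType) (F : nat -> R) a b N : (a <= b <= N)%N ->
  (forall d, (b <= d < N)%N -> F d = 0) ->
  \sum_(a <= d < b) F d = \sum_(d < N) (if (a <= d)%N then F d else 0).
Proof.
move=> /andP [le_ab le_bN] F0.
rewrite -(big_mkord xpredT (fun d => if (a <= d)%N then F d else 0)).
rewrite (big_cat_nat (leq0n a) (leq_trans le_ab le_bN)) /=.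
rewrite [X in X + _]big_nat_cond [X in X + _]big1 ?add0r;
  last by move=> d /andP [/andP [_ lt_da] _]; rewrite leqNgt lt_da.
rewrite (big_cat_nat le_ab le_bN) /= [X in _ + X]big_nat_cond [X in _ + X]big1 ?addr0;
  last by move=> d /andP [/andP [le_bd lt_dN] _]; rewrite F0 ?le_bd // if_same.
by rewrite big_nat_cond [RHS]big_nat_cond; apply: eq_bigr => d /andP [/andP [-> _] _].
Qed.

Definition slot_weight (R : fieldType) (n : nat) (Omega : nat -> R) (S : {set 'I_n}) : R :=
  Omega #|S| / ('C(n, #|S|))%:R.

Section SlotMass.
Variables (R : realFieldType) (n : nat) (Omega : nat -> R).
Hypothesis Omega_ge0 : forall d : nat, (d <= n)%N -> 0 <= Omega d.
Hypothesis Omega_sum1 : \sum_(d < n.+1) Omega d = 1.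
Implicit Types (S U : {set 'I_n}).
Local Notation w := (@slot_weight R n Omega).

Lemma slot_weight_ge0 S : 0 <= w S.
Proof.
by rewrite divr_ge0 ?ler0n // Omega_ge0 // -[X in (_ <= X)%N]card_ord max_card.
Qed.

Lemma sum_slot_weight_by_card (Q : pred {set 'I_n}) :
  \sum_S w S * (Q S)%:R =
  \sum_(d < n.+1) Omega d / ('C(n, d))%:R *
     #|[set S : {set 'I_n} | (#|S| == d) && Q S]|%:R.
Proof. exact: (sum_sets_by_card Q (fun d => Omega d / 'C(n, d)%:R) (eq_leq (card_ord n))). Qed.

Lemma sum_slot_weight : \sum_S w S = 1.
Proof.
rewrite (eq_bigr (fun S => w S * (predT S)%:R)) => [|S _]; last by rewrite mulr1.
rewrite sum_slot_weight_by_card -[RHS]Omega_sum1; apply: eq_bigr => d _.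
have -> : #|[set S : {set 'I_n} | (#|S| == d) && predT S]| = 'C(n, d).
  by rewrite -[X in 'C(X, _)]card_ord -card_draws; apply: eq_card => S; rewrite !inE andbT.
by rewrite divfK // pnatr_eq0 -lt0n bin_gt0 -ltnS.
Qed.

Variables (u : nat) (U : {set 'I_n}).
Hypotheses (cardU : #|U| = u) (u_gt0 : (0 < u)%N).

Lemma mass_reduced_deg (k : nat) : (k <= u)%N ->
  \sum_S w S * (#|S :&: U| == k)%:R =
  \sum_(k <= d < (n - u + k).+1) Omega d * 'C(u, k)%:R * ('C(n - u, d - k)%:R / 'C(n, d)%:R).
Proof.
move=> le_ku; rewrite sum_slot_weight_by_card (@sum_nat_to_ord _ _ _ _ n.+1); first last.
- by move=> d /andP [lt_d _]; rewrite (@bin_small (n - u)) ?mul0r ?mulr0 //; lia.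
- have := max_card U; rewrite card_ord cardU; lia.
apply: eq_bigr => d _; rewrite card_draws_traceE card_ord cardU.
by case: leqP => _; rewrite ?mulr0 // natrM; ring.
Qed.

Lemma mass_cloud :
  \sum_S w S * (1 < #|S :&: U|)%N%:R =
  1 - \sum_(1 <= d < (n - u + 1).+1)
          Omega d * u%:R * (('C(n - u, d - 1))%:R / ('C(n, d))%:R)
    - \sum_(0 <= d < (n - u).+1) Omega d * (('C(n - u, d))%:R / ('C(n, d))%:R).
Proof.
have deg0 : \sum_S w S * (#|S :&: U| == 0%N)%:R =
    \sum_(0 <= d < (n - u).+1) Omega d * (('C(n - u, d))%:R / ('C(n, d))%:R).
  by rewrite mass_reduced_deg // addn0; apply: eq_bigr => d _; rewrite bin0 subn0 mulr1.
have deg1 : \sum_S w S * (#|S :&: U| == 1%N)%:R = \sum_(1 <= d < (n - u + 1).+1)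
    Omega d * u%:R * (('C(n - u, d - 1))%:R / ('C(n, d))%:R).
  by rewrite mass_reduced_deg // bin1.
rewrite -deg0 -deg1 -[X in X - _ - _]sum_slot_weight -!sumrB; apply: eq_bigr => S _.
by case: #|S :&: U| => [|[|k]]; rewrite /= ?mulr0 ?mulr1 ?subr0 ?subrr ?sub0r.
Qed.

Lemma mass_cloud_pair x : x \in U ->
  \sum_S w S * ((x \in S) && (#|S :&: U| == 2))%:R =
  \sum_(2 <= d < (n - u + 2).+1)
      Omega d * (d%:R * (d%:R - 1)) * (1 / n%:R) * ((u%:R - 1) / (n%:R - 1))
      * (('C(n - u, d - 2))%:R / ('C(n - 2, d - 2))%:R).
Proof.
move=> xU; have le_un : (u <= n)%N by rewrite -cardU -[X in (_ <= X)%N]card_ord max_card.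
rewrite sum_slot_weight_by_card.
under eq_bigr do rewrite card_draws_pair_trace // card_ord cardU.
have [u_le1 | u_gt1] := leqP u 1.
  have -> : u = 1%N by apply/eqP; rewrite eqn_leq u_le1 u_gt0.
  rewrite !big1 // => d _; first by rewrite subrr mul0r mulr0 mul0r.
  by rewrite subnn mul0n if_same mulr0.
rewrite (@sum_nat_to_ord _ _ 2 (n - u + 2).+1 n.+1); first last.
- by move=> d /andP [lt_d _]; rewrite (@bin_small (n - u)) ?mul0r ?mulr0 //; lia.
- apply/andP; split; lia.
apply: eq_bigr => -[d /=]; rewrite ltnS => le_dn _.
case: (leqP 2 d) => [le_2d | _]; last by rewrite mulr0n mulr0.
move: le_dn; have [k ->] : exists k, n = k.+2 by exists (n - 2)%N; lia.
have [e ->] : exists e, d = e.+2 by exists (d - 2)%N; lia.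
rewrite !ltnS => le_ek; rewrite !subn2 /= -[e.+2%:R]natr1 -[k.+2%:R]natr1 !addrK.
have binE : 'C(k.+2, e.+2)%:R = (k.+2 * k.+1)%:R * 'C(k, e)%:R / (e.+2 * e.+1)%:R :> R.
  by rewrite -natrM -mul_bin_diag2 natrM mulfK // pnatr_eq0.
rewrite binE -(natrB _ u_gt0) subn1 !natrM; field.
have := ler0n R k; have := ler0n R e => e_ge0 k_ge0.
by apply/and5P; split; apply: lt0r_neq0; rewrite ?ltr0n ?bin_gt0 //; lra.
Qed.

Lemma cloud_hit x : x \in U ->
  \sum_S w S * (slot_pattern U S == None)%:R * ((x \in S) && (#|S :&: U| == 2))%:R
  = q_u n Omega u * \sum_S w S * (slot_pattern U S == None)%:R.
Proof.
move=> xU; have patN S : (slot_pattern U S == None) = (1 < #|S :&: U|)%N.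
  by rewrite /slot_pattern; case: ifP.
under eq_bigr do rewrite patN.
under [in RHS]eq_bigr do rewrite patN.
rewrite (eq_bigr (fun S => w S * ((x \in S) && (#|S :&: U| == 2))%:R)); last first.
  by move=> S _; case: (x \in S); case: #|S :&: U| => [|[|[|k]]]; rewrite /= ?mulr0 ?mulr1.
rewrite /q_u -(mass_cloud_pair xU) -mass_cloud.
(* If the cloud has no mass, [q_u] is [0 / 0 = 0] and both sides vanish. *)
set num := \sum_S w S * ((x \in S) && _)%:R; set den := \sum_S _.
have [den0 | den_neq0] := eqVneq den 0; last by rewrite divfK.
have num_ge0 : 0 <= num.
  by apply: sumr_ge0 => S _; rewrite mulr_ge0 ?ler0n ?slot_weight_ge0.
have le_num_den : num <= den.
  apply: ler_sum => S _; rewrite ler_wpM2l ?slot_weight_ge0 // ler_nat.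
  by case: (x \in S); case: #|S :&: U| => [|[|[|k]]].
have -> : num = 0 by lra.
by rewrite den0 !mul0r.
Qed.

Lemma ripple_hit x O : x \in U ->
  \sum_S w S * (slot_pattern U S == Some (O, true))%:R * (x \in S)%:R
  = 1 / u%:R * \sum_S w S * (slot_pattern U S == Some (O, true))%:R.
Proof.
move=> xU; have [sOU | /subsetPn [y yO yNU]] := boolP (O \subset ~: U); last first.
  have noS S : (slot_pattern U S == Some (O, true)) = false.
    rewrite slot_pattern_rippleE; apply/negbTE; rewrite negb_and; apply/orP; right.
    by apply/negP => /eqP eqO; move: yO yNU; rewrite -eqO !inE => /andP [/negbTE ->].
  by rewrite !big1 ?mulr0 // => S _; rewrite noS ?mulr0 ?mul0r.
have OU y : y \in U -> y \notin O by move=> yU; apply/negP => /(subsetP sOU); rewrite inE yU.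
have inj : {in U &, injective (fun y => y |: O)}.
  move=> y1 y2 y1U y2U eqy; have : y1 \in y2 |: O by rewrite -eqy setU11.
  by rewrite in_setU1 (negbTE (OU y1 y1U)) orbF => /eqP.
have sum_class (F : {set 'I_n} -> R) : \sum_S F S * (slot_pattern U S == Some (O, true))%:R =
    \sum_(y in U) F (y |: O).
  rewrite -(big_imset _ inj) /= -slot_pattern_ripple_imset // [RHS]big_mkcond /=.
  by apply: eq_bigr => S _; rewrite inE; case: (_ == _); rewrite ?mulr1 ?mulr0.
(* The neighbourhoods [y |: O] all have the same size, hence the same weight:
   the unresolved neighbour of a ripple slot is uniform on [U]. *)
have wE y : y \in U -> w (y |: O) = Omega #|O|.+1 / ('C(n, #|O|.+1))%:R.
  by move=> yU; rewrite /slot_weight cardsU1 OU.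
under eq_bigr do rewrite mulrAC.
rewrite (sum_class (fun S => w S * (x \in S)%:R)) (sum_class w).
rewrite (eq_bigr (fun y => w (x |: O) * (x == y)%:R)); last first.
  by move=> y yU; rewrite !wE // in_setU1 (negbTE (OU x xU)) orbF.
rewrite [in RHS](eq_bigr (fun _ => w (x |: O))) => [|y yU]; last by rewrite !wE.
rewrite sumr_const cardU (bigD1 x) //= eqxx mulr1 big1 ?addr0.
  by rewrite -mulr_natr; field; rewrite pnatr_eq0 -lt0n.
by move=> y /andP [_ neq_yx]; rewrite eq_sym (negbTE neq_yx) mulr0.
Qed.

End SlotMass.

(** * The transition law *)

Section PatternClass.
Variables (R : realFieldType) (n m : nat) (Omega : nat -> R).
Hypothesis Omega_ge0 : forall d : nat, (d <= n)%N -> 0 <= Omega d.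
Hypothesis Omega_sum1 : \sum_(d < n.+1) Omega d = 1.
Variables (u c r a b : nat) (U : {set 'I_n}) (x : 'I_n).
Hypotheses (cardU : #|U| = u) (u_gt0 : (0 < u)%N) (xU : x \in U).

Definition transition_law : R :=
  binomial_pmf r a (1 / u%:R) * binomial_pmf c b (q_u n Omega u).

Lemma pattern_class_law (tau : {ffun 'I_m -> option ({set 'I_n} * bool)}) (G0 : graph n m) :
  graph_pattern U G0 = tau -> state_is G0 U c r ->
  \sum_(G : graph n m | graph_pattern U G == tau) graph_weight Omega G *
      (#|leaving_ripple G U x| == a)%:R * (#|entering_ripple G U x| == b)%:R
  = transition_law * \sum_(G : graph n m | graph_pattern U G == tau) graph_weight Omega G.
Proof.
move=> patG0 /andP [/eqP cardC /eqP cardR].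
pose f j S := slot_weight Omega S * (slot_pattern U S == tau j)%:R.
have prod_f (G : graph n m) :
    \prod_j f j (G j) = graph_weight Omega G * (graph_pattern U G == tau)%:R.
  rewrite big_split /= eq_ffun_indicE; congr (_ * _).
  by apply: eq_bigr => j _; rewrite ffunE.
have classE (F : graph n m -> R) :
    \sum_(G | graph_pattern U G == tau) graph_weight Omega G * F G =
    \sum_(G : graph n m) \prod_j f j (G j) * F G.
  rewrite big_mkcond /=; apply: eq_bigr => G _.
  by rewrite prod_f; case: eqP; rewrite ?mulr1 ?mulr0 ?mul0r.
have sameG G : graph_pattern U G == tau -> graph_pattern U G = graph_pattern U G0.
  by rewrite patG0 => /eqP.
set Rs := ripple G0 U; set Cs := cloud G0 U.
rewrite (eq_bigr (fun G => graph_weight Omega G *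
    ((#|[set j in Rs | x \in G j]| == a)%:R *
     (#|[set j in Cs | (x \in G j) && (#|G j :&: U| == 2)]| == b)%:R))); last first.
  move=> G /sameG patG; rewrite -mulrA /leaving_ripple /entering_ripple.
  by rewrite (eq_ripple_pattern (subxx U) patG) (eq_cloud_pattern patG).
rewrite classE [in RHS](eq_bigr (fun G => graph_weight Omega G * 1)) => [|G _];
  last by rewrite mulr1.
rewrite classE; under [in RHS]eq_bigr do rewrite mulr1.
rewrite -bigA_distr_bigA; under [LHS]eq_bigr do rewrite mulrA.
rewrite (@binomial_law2 _ _ _ f Rs Cs (fun S => x \in S)
  (fun S => (x \in S) && (#|S :&: U| == 2)) (1 / u%:R) (q_u n Omega u)).
- by rewrite cardR cardC mulrA.
- by rewrite -setI_eq0; apply/eqP/setP => j; rewrite !inE; case: (#|_|) => [|[|]].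
- move=> j; rewrite inE /f => deg1.
  have -> : tau j = Some (G0 j :\: U, true) by rewrite -patG0 ffunE /slot_pattern (eqP deg1).
  exact: ripple_hit.
- move=> j; rewrite inE /f => deg2.
  have -> : tau j = None by rewrite -patG0 ffunE /slot_pattern deg2.
  exact: cloud_hit.
Qed.

Definition reach_state (G : graph n m) : R :=
  reach R G (n - u) U * (state_is G U c r)%:R.

Lemma sum_transition_law :
  \sum_(G : graph n m) graph_weight Omega G * reach_state G *
      (#|leaving_ripple G U x| == a)%:R * (#|entering_ripple G U x| == b)%:R
  = transition_law * \sum_(G : graph n m) graph_weight Omega G * reach_state G.
Proof.
rewrite (partition_big (graph_pattern U) xpredT) //.
rewrite [in RHS](partition_big (graph_pattern U) xpredT) // mulr_sumr.
apply: eq_bigr => tau _.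
have [G0 /eqP patG0 | empty] := pickP (fun G : graph n m => graph_pattern U G == tau); last first.
  by rewrite !big_pred0 ?mulr0 // => G; rewrite empty.
have reachE G : graph_pattern U G == tau -> reach_state G = reach_state G0.
  move=> /eqP; rewrite -patG0 => patG.
  by rewrite /reach_state (eq_reach_pattern R _ (subxx U) patG) (eq_state_pattern _ _ patG).
rewrite /= (eq_bigr (fun G => reach_state G0 * (graph_weight Omega G *
  (#|leaving_ripple G U x| == a)%:R * (#|entering_ripple G U x| == b)%:R))); last first.
  by move=> G /reachE ->; ring.
rewrite [in RHS](eq_bigr (fun G => reach_state G0 * graph_weight Omega G)); last first.
  by move=> G /reachE ->; rewrite mulrC.
rewrite -!mulr_sumr mulrCA.
have [inS | notS] := boolP (state_is G0 U c r); last first.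
  by rewrite /reach_state (negbTE notS) !mulr0 !mul0r.
by rewrite (pattern_class_law patG0 inS).
Qed.

End PatternClass.

Section TransitionProbability.
Variables (R : realFieldType) (n m : nat) (Omega : nat -> R).
Hypothesis Omega_ge0 : forall d : nat, (d <= n)%N -> 0 <= Omega d.
Hypothesis Omega_sum1 : \sum_(d < n.+1) Omega d = 1.
Variables (u c r a b : nat).
Hypotheses (u_gt0 : (0 < u)%N) (le_bc : (b <= c)%N) (le_arb : (a <= r + b)%N).
Local Notation reach_state := (@reach_state R n m u c r).

Lemma prob_stateE : prob_state n m Omega u c r =
  \sum_(U : {set 'I_n} | #|U| == u) \sum_(G : graph n m) graph_weight Omega G * reach_state U G.
Proof. by rewrite exchange_big; apply: eq_bigr => G _; rewrite mulr_sumr. Qed.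

Lemma decoder_step_eq (G : graph n m) (U : {set 'I_n}) :
  reach R G (n - u) U * (state_is G U c r)%:R *
  ((\sum_(j in ripple G U) (state_is G (resolve G U j) (c - b) (r + b - a))%:R)
     / #|ripple G U|%:R)
  = a%:R / r%:R * \sum_(x in U) reach_state U G *
      (#|leaving_ripple G U x| == a)%:R * (#|entering_ripple G U x| == b)%:R.
Proof.
rewrite /reach_state; have [inS | notS] := boolP (state_is G U c r); last first.
  by rewrite !mulr0 !mul0r big1 ?mulr0 // => x _; rewrite !mul0r.
rewrite /= mulr1; move: inS => /andP [/eqP cardC /eqP cardR].
rewrite (sum_ripple_state R cardC cardR le_bc le_arb) cardR.
under [in RHS]eq_bigr do rewrite -mulrA.
by rewrite -mulr_sumr; ring.
Qed.

Lemma prob_trans_factor :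
  prob_trans n m Omega u c r (c - b) (r + b - a) =
  a%:R / r%:R * u%:R * transition_law n Omega u c r a b * prob_state n m Omega u c r.
Proof.
rewrite prob_stateE mulr_sumr /prob_trans.
under eq_bigr do rewrite mulr_sumr.
rewrite exchange_big /=; apply: eq_bigr => U /eqP cardU.
under eq_bigr do rewrite decoder_step_eq mulrCA mulr_sumr.
rewrite -mulr_sumr exchange_big /=.
rewrite (eq_bigr (fun _ => transition_law n Omega u c r a b *
    \sum_(G : graph n m) graph_weight Omega G * reach_state U G)) => [|x xU].
  by rewrite sumr_const cardU -[_ *+ u]mulr_natr; ring.
rewrite -(sum_transition_law m Omega_ge0 Omega_sum1 c r a b cardU u_gt0 xU).
by apply: eq_bigr => G _; rewrite !mulrA.
Qed.

End TransitionProbability.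

Unset Implicit Arguments.

Theorem theorem1 (R : realFieldType) (n m : nat) (Omega : nat -> R)
  (HOmega_nonneg : forall d : nat, (d <= n)%N -> 0 <= Omega d)
  (HOmega_sum : \sum_(d < n.+1) Omega d = 1)
  (u c r a b : nat)
  (Hu1 : (1 <= u)%N) (Hun : (u <= n)%N) (Hr : (0 < r)%N)
  (Hcond : 0 < prob_state n m Omega u c r)
  (Hb : (b <= c)%N) (Ha : (1 <= a)%N) (Hab : (a <= r + b)%N) :
  cond_trans n m Omega u c r (c - b) (r + b - a)
  = ('C(c, b))%:R * (q_u n Omega u) ^+ b * (1 - q_u n Omega u) ^+ (c - b)
    * ('C(r - 1, a - 1))%:R * (1 / u%:R) ^+ (a - 1) * (1 - 1 / u%:R) ^+ (r - a).
Proof.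
rewrite /cond_trans (prob_trans_factor m HOmega_nonneg HOmega_sum Hu1 Hb Hab).
rewrite mulfK ?gt_eqF // /transition_law mulrA.
have uE : u%:R = (1 / u%:R)^-1 :> R by rewrite div1r invrK.
rewrite {1}uE binomial_pmf_pred // ?div1r ?invr_eq0 ?pnatr_eq0 -?lt0n // /binomial_pmf.
have -> : (r - 1 - (a - 1) = r - a)%N by lia.
by rewrite mulrC !mulrA.
Qed.
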